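(* For $t>0$ and $c>0$ let $f(t)=2\,\mathrm{arsh}\bigl(c\,\mathrm{sh}(t/2)\bigr)$ and $g(t)=ct$. If $c\in(0,1)$, then $f(t)/g(t)$ is an increasing function from $(0,\infty)$ to $(1,1/c)$; if $c>1$, then $f(t)/g(t)$ is a decreasing function from $(0,\infty)$ to $(1/c,1)$. In particular, for $c\in(0,1)$ and $t\ge0$, \[ ct\le 2\,\mathrm{arsh}\bigl(c\,\mathrm{sh}(t/2)\bigr)\le t, \] and for $c>1$ and $t\ge0$, \[ t\le 2\,\mathrm{arsh}\bigl(c\,\mathrm{sh}(t/2)\bigr)\le ct. \]
   Context: $\mathrm{sh}$ is the hyperbolic sine and $\mathrm{arsh}$ its inverse. *)

From Stdlib Require Import Reals.
Open Scope R_scope.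

Definition fP (c t : R) : R := 2 * arcsinh (c * sinh (t / 2)).
Definition gP (c t : R) : R := c * t.
Definition ratioP (c t : R) : R := fP c t / gP c t.

From Stdlib Require Import Reals Lra Psatz.
From Coquelicot Require Import Rcomplements.
Open Scope R_scope.

(* Put F(u) = arsh(c sh u), so that ratioP c (2u) = F(u) / (c u), F(0) = 0 and
   F'(0) = c.  For c < 1 the derivative F'(u)^2 = c^2 (1 + sh^2 u) / (1 + c^2 sh^2 u)
   increases with u, so F is strictly convex on [0, oo) and its slope F(u) / u
   increases strictly from F'(0) = c; it stays below 1 because F(u) < u and
   approaches 1 because F(u) >= u + ln c.  The case c > 1 reduces to this one:
   arsh(c sh .) and arsh(c^-1 sh .) are inverse to each other, which turns the
   ratio for c into the reciprocal of the ratio for 1/c at a reparametrized point. *)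

Lemma cosh_sq u : cosh u ^ 2 = 1 + sinh u ^ 2.
Proof.
  unfold cosh, sinh.
  assert (exp u * exp (- u) = 1) by (rewrite <- exp_plus, Rplus_opp_r; apply exp_0).
  nra.
Qed.

Lemma cosh_pos u : 0 < cosh u.
Proof. unfold cosh; pose proof (exp_pos u); pose proof (exp_pos (- u)); lra. Qed.

Lemma sinh_pos u : 0 < u -> 0 < sinh u.
Proof. intros Hu; rewrite <- sinh_0; apply sinh_lt, Hu. Qed.

Lemma sinh_plus_cosh u : sinh u + cosh u = exp u.
Proof. unfold sinh, cosh; field. Qed.

Lemma cosh_surjective y : 1 < y -> exists u, 0 < u /\ cosh u = y.
Proof.
  intros Hy.
  set (w := sqrt (y ^ 2 - 1)).
  assert (Hw : w ^ 2 = y ^ 2 - 1) by (unfold w; rewrite pow2_sqrt; nra).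
  assert (Hw0 : 0 < w) by (apply sqrt_lt_R0; nra).
  exists (arcsinh w); split.
  - rewrite <- arcsinh_0; apply arcsinh_lt, Hw0.
  - pose proof (cosh_sq (arcsinh w)) as Hsq; rewrite sinh_arcsinh, Hw in Hsq.
    pose proof (cosh_pos (arcsinh w)); nra.
Qed.

Lemma ln_le_ln x y : 0 < x -> x <= y -> ln x <= ln y.
Proof. intros Hx [Hxy | <-]; [left; apply ln_increasing | right]; auto. Qed.

Lemma Rdiv_lt_cross x y p q : 0 < p -> 0 < q -> x * q < y * p -> x / p < y / q.
Proof.
  intros Hp Hq Hxy.
  replace (x / p) with (x * q * / (p * q)) by (field; lra).
  replace (y / q) with (y * p * / (p * q)) by (field; lra).
  apply Rmult_lt_compat_r; [apply Rinv_0_lt_compat; nra | exact Hxy].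
Qed.

Lemma IVT_pos_root (h : R -> R) a b :
  continuity h -> 0 < a -> 0 < b -> h a < 0 < h b -> exists z, 0 < z /\ h z = 0.
Proof.
  intros Hh Ha Hb Hab.
  assert (Hsign : h a * h b <= 0) by nra.
  destruct (Rle_lt_dec a b) as [Hle | Hlt].
  - destruct (IVT_cor h a b Hh Hle Hsign) as (z & Hz & Hz0).
    exists z; split; [lra | exact Hz0].
  - rewrite Rmult_comm in Hsign.
    destruct (IVT_cor h b a Hh (Rlt_le _ _ Hlt) Hsign) as (z & Hz & Hz0).
    exists z; split; [lra | exact Hz0].
Qed.

Section ConvexSlope.

Variables G G' : R -> R.
Hypothesis G_deriv : forall u, derivable_pt_lim G u (G' u).
Hypothesis G_0 : G 0 = 0.
Hypothesis G'_increasing : forall a b, 0 <= a -> a < b -> G' a < G' b.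

Lemma secant_bounds u : 0 < u -> G' 0 * u < G u < G' u * u.
Proof.
  intros Hu.
  destruct (MVT_cor2 G G' 0 u Hu (fun x _ => G_deriv x)) as (x & Hx & Hxu).
  rewrite G_0, !Rminus_0_r in Hx.
  assert (G' 0 < G' x) by (apply G'_increasing; lra).
  assert (G' x < G' u) by (apply G'_increasing; lra).
  split; nra.
Qed.

Lemma slope_increasing s t : 0 < s -> s < t -> G s / s < G t / t.
Proof.
  intros Hs Hst.
  destruct (MVT_cor2 G G' s t Hst (fun x _ => G_deriv x)) as (x & Hx & Hsx).
  assert (Hsec : G s < G' s * s) by (apply secant_bounds, Hs).
  assert (G' s < G' x) by (apply G'_increasing; lra).
  apply Rdiv_lt_cross; [lra | lra |].
  (* s G t - t G s = s (t - s) (G' x - G' s) + (t - s) (G' s s - G s) *)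
  assert (0 < s * (t - s) * (G' x - G' s)) by (apply Rmult_lt_0_compat; nra).
  assert (0 < (t - s) * (G' s * s - G s)) by (apply Rmult_lt_0_compat; lra).
  nra.
Qed.

End ConvexSlope.

Definition arsh_sh (c u : R) : R := arcsinh (c * sinh u).
Definition arsh_sh' (c u : R) : R := c * cosh u / sqrt ((c * sinh u) ^ 2 + 1).

Lemma derivable_pt_lim_arsh_sh c u : derivable_pt_lim (arsh_sh c) u (arsh_sh' c u).
Proof.
  unfold arsh_sh, arsh_sh'.
  replace (c * cosh u / sqrt ((c * sinh u) ^ 2 + 1))
    with (/ sqrt ((c * sinh u) ^ 2 + 1) * (c * cosh u)) by (unfold Rdiv; ring).
  apply (derivable_pt_lim_comp (fun x => c * sinh x) arcsinh u).
  - apply derivable_pt_lim_scal, derivable_pt_lim_sinh.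
  - apply derivable_pt_lim_arcsinh.
Qed.

Lemma arsh_sh_0 c : arsh_sh c 0 = 0.
Proof. unfold arsh_sh; rewrite sinh_0, Rmult_0_r; apply arcsinh_0. Qed.

Lemma arsh_sh'_0 c : arsh_sh' c 0 = c.
Proof.
  unfold arsh_sh'; rewrite cosh_0, sinh_0.
  replace ((c * 0) ^ 2 + 1) with 1 by ring.
  rewrite sqrt_1; field.
Qed.

Lemma arsh_sh_lt c s t : 0 < c -> s < t -> arsh_sh c s < arsh_sh c t.
Proof.
  intros Hc Hst; apply arcsinh_lt, Rmult_lt_compat_l; [exact Hc | apply sinh_lt, Hst].
Qed.

Lemma arsh_sh_inv c u : c <> 0 -> arsh_sh (/ c) (arsh_sh c u) = u.
Proof.
  intros Hc; unfold arsh_sh.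
  rewrite sinh_arcsinh, <- Rmult_assoc, Rinv_l, Rmult_1_l by exact Hc.
  apply arcsinh_sinh.
Qed.

Lemma arsh_sh_lt_id c u : c < 1 -> 0 < u -> arsh_sh c u < u.
Proof.
  intros Hc Hu; unfold arsh_sh.
  rewrite <- (arcsinh_sinh u) at 2; apply arcsinh_lt.
  pose proof (sinh_pos u Hu); nra.
Qed.

Lemma ln_plus_le_arsh_sh c u : 0 < c <= 1 -> ln c + u <= arsh_sh c u.
Proof.
  intros Hc; unfold arsh_sh, arcsinh.
  rewrite <- (ln_exp u) at 1; rewrite <- ln_mult by (lra || apply exp_pos).
  pose proof (exp_pos u); pose proof (cosh_pos u).
  apply ln_le_ln; [nra |].
  rewrite <- sinh_plus_cosh, Rmult_plus_distr_l.
  apply Rplus_le_compat_l.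
  (* (c ch u)^2 = (c sh u)^2 + c^2 <= (c sh u)^2 + 1 *)
  rewrite <- (sqrt_pow2 (c * cosh u)) by nra.
  apply sqrt_le_1_alt.
  pose proof (cosh_sq u); nra.
Qed.

Lemma arsh_sh'_le c u : 0 <= c -> arsh_sh' c u <= c * cosh u.
Proof.
  intros Hc; unfold arsh_sh'.
  set (P := sqrt ((c * sinh u) ^ 2 + 1)).
  assert (HP : 1 <= P).
  { rewrite <- sqrt_1; apply sqrt_le_1_alt; pose proof (pow2_ge_0 (c * sinh u)); lra. }
  pose proof (cosh_pos u).
  apply Rle_div_l; [lra |].
  rewrite <- (Rmult_1_r (c * cosh u)) at 1.
  apply Rmult_le_compat_l; nra.
Qed.

Lemma arsh_sh'_increasing c a b :
  0 < c < 1 -> 0 <= a -> a < b -> arsh_sh' c a < arsh_sh' c b.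
Proof.
  intros Hc Ha Hab; unfold arsh_sh'.
  assert (Hc2 : 0 < c ^ 2 * (1 - c ^ 2)) by (apply Rmult_lt_0_compat; nra).
  assert (Hsa : 0 <= sinh a) by (destruct Ha as [Ha | <-];
    [left; apply sinh_pos, Ha | rewrite sinh_0; lra]).
  assert (Hs2 : sinh a ^ 2 < sinh b ^ 2) by (pose proof (sinh_lt a b Hab); nra).
  pose proof (sqrt_lt_R0 ((c * sinh a) ^ 2 + 1) ltac:(nra)) as HP.
  pose proof (sqrt_lt_R0 ((c * sinh b) ^ 2 + 1) ltac:(nra)) as HQ.
  pose proof (cosh_pos a); pose proof (cosh_pos b).
  apply Rdiv_lt_cross; [exact HP | exact HQ |].
  apply Rsqr_incrst_0;
    [| left; apply Rmult_lt_0_compat; [apply Rmult_lt_0_compat |]; lra ..].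
  rewrite !Rsqr_pow2, !Rpow_mult_distr, !pow2_sqrt, !cosh_sq by nra.
  apply Rlt_0_minus.
  replace (_ - _) with (c ^ 2 * (1 - c ^ 2) * (sinh b ^ 2 - sinh a ^ 2)) by ring.
  apply Rmult_lt_0_compat; lra.
Qed.

Lemma fP_arsh_sh c t : fP c t = 2 * arsh_sh c (t / 2).
Proof. reflexivity. Qed.

Lemma fP_0 c : fP c 0 = 0.
Proof. rewrite fP_arsh_sh, Rdiv_0_l, arsh_sh_0; ring. Qed.

Lemma fP_lt c s t : 0 < c -> s < t -> fP c s < fP c t.
Proof.
  intros Hc Hst; rewrite !fP_arsh_sh.
  pose proof (arsh_sh_lt c (s / 2) (t / 2) Hc ltac:(lra)); lra.
Qed.

Lemma fP_pos c t : 0 < c -> 0 < t -> 0 < fP c t.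
Proof. intros Hc Ht; rewrite <- (fP_0 c); apply fP_lt; assumption. Qed.

Lemma fP_inv c t : c <> 0 -> fP (/ c) (fP c t) = t.
Proof.
  intros Hc; rewrite !fP_arsh_sh.
  replace (2 * arsh_sh c (t / 2) / 2) with (arsh_sh c (t / 2)) by field.
  rewrite arsh_sh_inv by exact Hc; field.
Qed.

Lemma ratioP_slope c t : c <> 0 -> t <> 0 -> ratioP c t = arsh_sh c (t / 2) / (t / 2) / c.
Proof. intros; unfold ratioP, fP, gP, arsh_sh; field; lra. Qed.

Lemma ratioP_between c t a b : 0 < c -> 0 < t ->
  a < ratioP c t < b <-> a * (c * t) < fP c t < b * (c * t).
Proof.
  intros Hc Ht; unfold ratioP, gP.
  assert (Hct : c * t > 0) by nra.
  rewrite (Rlt_div_l _ _ _ Hct), <- (Rlt_div_r _ _ _ Hct); tauto.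
Qed.

Lemma ratioP_reciprocal c t : 0 < c -> 0 < t -> ratioP c t = / ratioP (/ c) (fP c t).
Proof.
  intros Hc Ht; unfold ratioP at 2, gP.
  rewrite fP_inv, Rinv_div by lra.
  unfold ratioP, gP; field; lra.
Qed.

Section ContractingFactor.

Variable c : R.
Hypothesis c_range : 0 < c < 1.

Let arsh_sh'_incr a b : 0 <= a -> a < b -> arsh_sh' c a < arsh_sh' c b :=
  arsh_sh'_increasing c a b c_range.

Lemma arsh_sh_secant_bounds u : 0 < u -> c * u < arsh_sh c u < arsh_sh' c u * u.
Proof.
  rewrite <- (arsh_sh'_0 c) at 1.
  exact (secant_bounds _ _ (derivable_pt_lim_arsh_sh c) (arsh_sh_0 c) arsh_sh'_incr u).
Qed.

Lemma ratioP_increasing_lt1 s t : 0 < s -> s < t -> ratioP c s < ratioP c t.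
Proof.
  intros Hs Hst; rewrite !ratioP_slope by lra.
  apply Rmult_lt_compat_r; [apply Rinv_0_lt_compat; lra |].
  apply (slope_increasing _ _ (derivable_pt_lim_arsh_sh c) (arsh_sh_0 c) arsh_sh'_incr); lra.
Qed.

Lemma ratioP_bounds_lt1 t : 0 < t -> 1 < ratioP c t < 1 / c.
Proof.
  intros Ht; apply ratioP_between; [lra | exact Ht |].
  replace (1 / c * (c * t)) with t by (field; lra).
  rewrite fP_arsh_sh.
  pose proof (arsh_sh_secant_bounds (t / 2) ltac:(lra)).
  pose proof (arsh_sh_lt_id c (t / 2) ltac:(lra) ltac:(lra)).
  lra.
Qed.

Lemma ratioP_surjective_lt1 y : 1 < y < 1 / c -> exists t, 0 < t /\ ratioP c t = y.
Proof.
  intros Hy; set (k := c * y).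
  assert (Hk : k < 1).
  { unfold k; replace 1 with (c * (1 / c)) by (field; lra).
    apply Rmult_lt_compat_l; lra. }
  destruct (cosh_surjective y (proj1 Hy)) as (a & Ha & Hcosh).
  assert (Hbelow : arsh_sh c a - k * a < 0).
  { pose proof (arsh_sh_secant_bounds a Ha).
    pose proof (arsh_sh'_le c a ltac:(lra)).
    unfold k; rewrite <- Hcosh; nra. }
  assert (Hlnc : ln c < 0) by (rewrite <- ln_1; apply ln_increasing; lra).
  set (b := (1 - ln c) / (1 - k)).
  assert (Hb : 0 < b) by (apply Rdiv_lt_0_compat; lra).
  assert (Hbk : b * (1 - k) = 1 - ln c) by (unfold b; field; lra).
  assert (Habove : 0 < arsh_sh c b - k * b).
  { pose proof (ln_plus_le_arsh_sh c b ltac:(lra)); nra. }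
  destruct (IVT_pos_root (fun u => arsh_sh c u - k * u) a b) as (z & Hz & Hroot);
    [| exact Ha | exact Hb | split; assumption |].
  { intros u; apply derivable_continuous_pt.
    exists (arsh_sh' c u - k * 1).
    apply (derivable_pt_lim_minus (arsh_sh c) (fun u => k * u)).
    - apply derivable_pt_lim_arsh_sh.
    - apply (derivable_pt_lim_scal id), derivable_pt_lim_id. }
  exists (2 * z); split; [lra |].
  rewrite ratioP_slope by lra.
  replace (2 * z / 2) with z by field.
  replace (arsh_sh c z) with (k * z) by lra.
  unfold k; field; lra.
Qed.

Lemma fP_bounds_lt1 t : 0 <= t -> c * t <= fP c t <= t.
Proof.
  intros [Ht | <-]; [| rewrite fP_0; lra].
  pose proof (proj1 (ratioP_between c t 1 (1 / c) ltac:(lra) Ht) (ratioP_bounds_lt1 t Ht)).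
  replace (1 / c * (c * t)) with t in * by (field; lra).
  lra.
Qed.

End ContractingFactor.

Section ExpandingFactor.

Variable c : R.
Hypothesis c_gt1 : 1 < c.

Let inv_c_range : 0 < / c < 1.
Proof.
  split; [apply Rinv_0_lt_compat; lra |].
  rewrite <- Rinv_1; apply Rinv_1_lt_contravar; lra.
Qed.

Let one_div_inv_c : 1 / / c = c.
Proof. unfold Rdiv; rewrite Rmult_1_l; apply Rinv_inv. Qed.

Lemma ratioP_decreasing_gt1 s t : 0 < s -> s < t -> ratioP c t < ratioP c s.
Proof.
  intros Hs Hst; rewrite !(ratioP_reciprocal c) by lra.
  pose proof (fP_pos c s ltac:(lra) Hs).
  pose proof (ratioP_bounds_lt1 (/ c) inv_c_range (fP c s) ltac:(assumption)).
  apply Rinv_lt_contravar.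
  - pose proof (ratioP_bounds_lt1 (/ c) inv_c_range (fP c t) ltac:(apply fP_pos; lra)).
    nra.
  - apply ratioP_increasing_lt1; [exact inv_c_range | assumption |].
    apply fP_lt; lra.
Qed.

Lemma ratioP_bounds_gt1 t : 0 < t -> 1 / c < ratioP c t < 1.
Proof.
  intros Ht; rewrite ratioP_reciprocal by lra.
  pose proof (ratioP_bounds_lt1 (/ c) inv_c_range (fP c t) ltac:(apply fP_pos; lra)) as Hr.
  rewrite one_div_inv_c in Hr.
  split.
  - unfold Rdiv; rewrite Rmult_1_l; apply Rinv_lt_contravar; nra.
  - rewrite <- Rinv_1; apply Rinv_1_lt_contravar; lra.
Qed.

Lemma ratioP_surjective_gt1 y : 1 / c < y < 1 -> exists t, 0 < t /\ ratioP c t = y.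
Proof.
  intros Hy.
  assert (Hy0 : 0 < y) by (pose proof (Rdiv_lt_0_compat 1 c ltac:(lra) ltac:(lra)); lra).
  assert (Hinv_y : 1 < / y < 1 / / c).
  { rewrite one_div_inv_c; split.
    - rewrite <- Rinv_1; apply Rinv_lt_contravar; lra.
    - rewrite <- (Rinv_inv c); apply Rinv_lt_contravar; [pose proof inv_c_range; nra |].
      unfold Rdiv in Hy; rewrite Rmult_1_l in Hy; lra. }
  destruct (ratioP_surjective_lt1 (/ c) inv_c_range (/ y) Hinv_y) as (v & Hv & Hrv).
  exists (fP (/ c) v); split; [apply fP_pos; [apply inv_c_range | exact Hv] |].
  rewrite ratioP_reciprocal by (try apply fP_pos; lra).
  pose proof (fP_inv (/ c) v ltac:(lra)) as Hinv; rewrite Rinv_inv in Hinv.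
  rewrite Hinv, Hrv; apply Rinv_inv.
Qed.

Lemma fP_bounds_gt1 t : 0 <= t -> t <= fP c t <= c * t.
Proof.
  intros [Ht | <-]; [| rewrite fP_0; lra].
  pose proof (proj1 (ratioP_between c t (1 / c) 1 ltac:(lra) Ht) (ratioP_bounds_gt1 t Ht)).
  replace (1 / c * (c * t)) with t in * by (field; lra).
  lra.
Qed.

End ExpandingFactor.

Theorem proposition3p5 :
  (forall c : R, 0 < c < 1 ->
     (forall s t : R, 0 < s -> s < t -> ratioP c s < ratioP c t) /\
     (forall y : R, (1 < y < 1 / c) <-> (exists t : R, 0 < t /\ ratioP c t = y))) /\
  (forall c : R, 1 < c ->
     (forall s t : R, 0 < s -> s < t -> ratioP c t < ratioP c s) /\
     (forall y : R, (1 / c < y < 1) <-> (exists t : R, 0 < t /\ ratioP c t = y))) /\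
  (forall c t : R, 0 < c < 1 -> 0 <= t ->
     c * t <= 2 * arcsinh (c * sinh (t / 2)) <= t) /\
  (forall c t : R, 1 < c -> 0 <= t ->
     t <= 2 * arcsinh (c * sinh (t / 2)) <= c * t).
Proof.
  split; [| split; [| split]].
  - intros c Hc; split; [exact (ratioP_increasing_lt1 c Hc) |].
    intros y; split; [exact (ratioP_surjective_lt1 c Hc y) |].
    intros (t & Ht & <-); exact (ratioP_bounds_lt1 c Hc t Ht).
  - intros c Hc; split; [exact (ratioP_decreasing_gt1 c Hc) |].
    intros y; split; [exact (ratioP_surjective_gt1 c Hc y) |].
    intros (t & Ht & <-); exact (ratioP_bounds_gt1 c Hc t Ht).
  - intros c t Hc; exact (fP_bounds_lt1 c Hc t).
  - intros c t Hc; exact (fP_bounds_gt1 c Hc t).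
Qed.
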